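(* Let $d\ge 3$, let $K$ be an algebraically closed field of characteristic $p$ with $p=0$ or $p>d$, let $X_d\subset\mathbb{P}^3(K)$ be a smooth surface of degree $d$, let $L\subset X_d$ be a line, and let $P\in L$ be a point such that the Hessian quadric $V_P$ does not contain the tangent plane $\mathbb{T}_PX_d$. If $L$ is a line of the second kind, then the form $\mathfrak t_P^{(3)}$ vanishes identically on the set-theoretic intersection $\mathbb{T}_PX_d\cap V_P$.
   Context: Let $f$ be a homogeneous defining polynomial of $X_d$. For $P=(p_0:\dots:p_3)$ and $j=1,2,3$ put $\mathfrak t_P^{(j)}(z):=\sum_{0\le i_1,\dots,i_j\le 3}\frac{\partial^j f}{\partial w_{i_1}\cdots\partial w_{i_j}}(p_0,\dots,p_3)\,z_{i_1}\cdots z_{i_j}$. Then $\mathbb{T}_PX_d=V(\mathfrak t_P^{(1)})$ is the projective tangent plane of $X_d$ at $P$ and $V_P=V(\mathfrak t_P^{(2)})$ is the Hessian quadric at $P$. A line $L\subset X_d$ is called a line of the second kind if it meets every plane curve $\Gamma\in|\mathcal O_{X_d}(1)-L|$ (i.e. every curve residual to $L$ in the intersection of $X_d$ with a plane containing $L$) only in inflection points of $\Gamma$; otherwise it is of the first kind. *)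

From HB Require Import structures.
From mathcomp Require Import all_boot all_order all_algebra.
Set Implicit Arguments. Unset Strict Implicit. Unset Printing Implicit Defensive.
Import Order.TTheory GRing.Theory Num.Theory.
Local Open Scope ring_scope.

Notation exps n D := {ffun 'I_n -> 'I_D.+1}.
(* polynomials in n variables w_0..w_{n-1} with all partial degrees <= D *)
Notation mpoly K n D := {ffun exps n D -> K}.

Definition meval (K : comNzRingType) n D (p : mpoly K n D) (x : 'I_n -> K) : K :=
  \sum_(e : exps n D) p e * \prod_(i < n) x i ^+ e i.

Definition mevalP (K : comNzRingType) n D (p : mpoly K n D) (x : 'I_n -> {poly K})
  : {poly K} :=
  \sum_(e : exps n D) (p e)%:P * \prod_(i < n) x i ^+ e i.

Definition homogeneous (K : comNzRingType) n D (p : mpoly K n D) (d : nat) : Prop :=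
  forall e : exps n D, p e != 0 -> (\sum_(i < n) nat_of_ord (e i))%N = d.

(* e + delta_i, truncated into the bounded exponent type *)
Definition exp_incr n D (e : exps n D) (i : 'I_n) : exps n D :=
  [ffun j => if j == i then inord (e i).+1 else e j].

Definition mderiv (K : comNzRingType) n D (i : 'I_n) (p : mpoly K n D) : mpoly K n D :=
  [ffun e : exps n D => if (e i < D)%N then (e i).+1%:R * p (exp_incr e i) else 0].

Definition mderivs (K : comNzRingType) n D j (s : {ffun 'I_j -> 'I_n}) (p : mpoly K n D)
  : mpoly K n D :=
  foldr (@mderiv K n D) p [seq s k | k <- enum 'I_j].

Definition tP (K : comNzRingType) D (j : nat) (f : mpoly K 4 D) (P z : 'I_4 -> K) : K :=
  \sum_(s : {ffun 'I_j -> 'I_4}) meval (mderivs s f) P * \prod_(k < j) z (s k).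

Definition nonzero_vec (K : nzRingType) n (x : 'I_n -> K) : Prop := exists i, x i != 0.

Definition indep2 (K : nzRingType) n (a b : 'I_n -> K) : Prop :=
  forall s t : K, (forall i, s * a i + t * b i = 0) -> s = 0 /\ t = 0.

Definition indep3 (K : nzRingType) n (a b c : 'I_n -> K) : Prop :=
  forall s t u : K, (forall i, s * a i + t * b i + u * c i = 0) -> [/\ s = 0, t = 0 & u = 0].

Definition smooth_surface (K : comNzRingType) D (f : mpoly K 4 D) : Prop :=
  forall x : 'I_4 -> K, nonzero_vec x -> meval f x = 0 ->
    ~ (forall i, meval (mderiv i f) x = 0).

Definition line_on (K : comNzRingType) D (f : mpoly K 4 D) (a b : 'I_4 -> K) : Prop :=
  indep2 a b /\ forall s t : K, meval f (fun i => s * a i + t * b i) = 0.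

Definition vec3 (K : Type) (s t u : K) : 'I_3 -> K := fun k => nth s [:: s; t; u] k.

(* Let L = <a,b> ⊂ V(f).  For every plane Π = <a,b,c> ⊇ L, with plane
   coordinates (s:t:u) (so that L = {u = 0}), the residual curve Γ ⊂ Π is
   V(h), where f(s a + t b + u c) = u * h(s,t,u).  A point Q ∈ Γ is an
   inflection point of Γ if some line through Q (direction v, independent of
   Q) meets Γ at Q with intersection multiplicity >= 3, i.e. 'X^3 divides
   h(Q + X v) (this includes the case that the line lies in Γ).
   L is of the second kind if every point of L ∩ Γ is an inflection point of Γ,
   for every such Γ. *)
Definition second_kind (K : fieldType) D (f : mpoly K 4 D) (a b : 'I_4 -> K) : Prop :=
  forall c : 'I_4 -> K, indep3 a b c ->
  forall h : mpoly K 3 D,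
    (forall s t u : K,
        meval f (fun i => s * a i + t * b i + u * c i) = u * meval h (vec3 s t u)) ->
    forall s t : K, nonzero_vec (vec3 s t 0) -> meval h (vec3 s t 0) = 0 ->
      exists v : 'I_3 -> K, indep2 (vec3 s t 0) v /\
        ('X^3 %| mevalP h (fun k => (vec3 s t 0 k)%:P + v k *: 'X))%R.

From HB Require Import structures.
From mathcomp Require Import all_boot all_order all_algebra.
From mathcomp Require Import ring zify.
From Stdlib Require Import Classical.
Import Order.TTheory GRing.Theory Num.Theory.
Local Open Scope ring_scope.

Set Implicit Arguments. Unset Strict Implicit. Unset Printing Implicit Defensive.

(* Write [F_w(x) = f (P + x w)], so that [t_P^(j)(w) = j! [x^j] F_w]. If [z] lies in the
   span of [L], then [F_z = 0]. Otherwise [a, b, z] span a plane on which [f = u h], where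
   [h] defines the residual curve, and [F_w(x) = v_u x h (Q + x v)] for
   [w = v_s a + v_t b + v_u z], with [Q] the plane coordinates of [P]. The hypotheses on [z]
   give [h Q = 0] and make the gradient of [h] at [Q] kill [e_u] and [Q]. This gradient is
   nonzero because [V_P] does not contain the tangent plane, and the second-kind hypothesis
   gives a direction [v] independent of [Q] along which [h] has contact order 3, so the
   gradient also kills [v]. Hence [e_u] lies in the span of [Q] and [v], i.e.
   [z = al P + be w_v], and the contact order 4 of [f] along [w_v] transfers to [z] by
   homogeneity. *)

Section ClosedFieldPolynomials.
Variable K : closedFieldType.

Lemma poly_horner_eq0 (p : {poly K}) : (forall x, p.[x] = 0) -> p = 0.
Proof.
move=> p0; apply/eqP; apply: contraT => p_neq0.
(* [p * 'X - 1] is nonconstant, hence has a root, yet it evaluates to [-1] everywhere. *)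
have size_pX1 : size (p * 'X - 1) != 1%N.
  have lt_size : (size (- 1 : {poly K})%R < size (p * 'X)%R)%N.
    by rewrite size_polyN size_polyC oner_neq0 size_mulX // ltnS lt0n size_poly_eq0.
  by rewrite size_polyDl // size_mulX // eqSS size_poly_eq0.
case/closed_rootP: size_pX1 => x /rootP.
by rewrite hornerD hornerN hornerM p0 mul0r hornerC sub0r => /eqP; rewrite oppr_eq0 oner_eq0.
Qed.

Lemma poly_horner_eq (p q : {poly K}) : (forall x, p.[x] = q.[x]) -> p = q.
Proof.
move=> pq; apply/eqP; rewrite -subr_eq0; apply/eqP/poly_horner_eq0 => x.
by rewrite hornerD hornerN pq subrr.
Qed.

Lemma poly_horner_eq_off_root (r p q : {poly K}) : r != 0 ->
  (forall x, ~~ root r x -> p.[x] = q.[x]) -> p = q.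
Proof.
move=> r_neq0 pq; apply/eqP; rewrite -subr_eq0.
suff : (p - q) * r == 0 by rewrite mulf_eq0 (negbTE r_neq0) orbF.
apply/eqP/poly_horner_eq0 => x; rewrite hornerM.
have [/rootP -> | /pq pqx] := boolP (root r x); first by rewrite mulr0.
by rewrite hornerD hornerN pqx subrr mul0r.
Qed.

Lemma bivariate_coef_eq0 n (cf : nat -> nat -> K) :
  (forall s t, \sum_(i < n) \sum_(j < n) cf i j * (s ^+ i * t ^+ j) = 0) ->
  forall i j, (i < n)%N -> (j < n)%N -> cf i j = 0.
Proof.
move=> cf_eval0 i j i_lt j_lt.
pose q i : {poly K} := \poly_(j < n) cf i j.
have q_eval0 t : \poly_(i < n) (q i).[t] = 0.
  apply: poly_horner_eq0 => s; rewrite horner_poly -[RHS](cf_eval0 s t).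
  apply: eq_bigr => i' _; rewrite horner_poly mulr_suml.
  by apply: eq_bigr => j' _; ring.
have qi0 : q i = 0.
  apply: poly_horner_eq0 => t; move: (congr1 (fun p : {poly K} => p`_i) (q_eval0 t)).
  by rewrite coef_poly i_lt coef0.
by move: (congr1 (fun p : {poly K} => p`_j) qi0); rewrite coef_poly j_lt coef0.
Qed.
End ClosedFieldPolynomials.

Lemma dvdp_XnP (F : fieldType) (p : {poly F}) k :
  reflect (forall i, (i < k)%N -> p`_i = 0) ('X^k %| p).
Proof.
apply: (iffP idP) => [/dvdpP [q ->] i ik | p_low]; first by rewrite coefMXn ik.
apply/dvdpP; exists (\poly_(i < size p) p`_(i + k)); apply/polyP => i.
rewrite coefMXn; case: ltnP => ik; first exact: p_low.
rewrite coef_poly subnK //; case: ltnP => // le_p.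
by rewrite nth_default // (leq_trans le_p) // leq_subr.
Qed.

Section RestrictionToLines.
Variable R : comNzRingType.

Lemma meval_ext n D (p : mpoly R n D) x y : (forall i, x i = y i) ->
  meval p x = meval p y.
Proof. by move=> xy; apply: eq_bigr => e _; congr (_ * _); apply: eq_bigr => i _; rewrite xy. Qed.

Lemma meval_homogeneous n D (p : mpoly R n D) d x l : homogeneous p d ->
  meval p (fun i => l * x i) = l ^+ d * meval p x.
Proof.
move=> hom_p; rewrite /meval mulr_sumr; apply: eq_bigr => e _.
have [-> | pe] := eqVneq (p e) 0; first by rewrite !mul0r mulr0.
under eq_bigr do rewrite exprMn.
by rewrite big_split /= prodrXr (hom_p e pe) mulrCA.
Qed.

Lemma horner_mevalP n D (p : mpoly R n D) x t :
  (mevalP p x).[t] = meval p (fun i => (x i).[t]).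
Proof.
rewrite /mevalP /meval horner_sum; apply: eq_bigr => e _.
rewrite hornerM hornerC horner_prod; congr (_ * _); apply: eq_bigr => i _.
by rewrite horner_exp.
Qed.

Definition param_line n (x w : 'I_n -> R) : 'I_n -> {poly R} :=
  fun i => (x i)%:P + w i *: 'X.

Definition restr_line n D (p : mpoly R n D) (x w : 'I_n -> R) : {poly R} :=
  mevalP p (param_line x w).

Lemma horner_restr_line n D (p : mpoly R n D) x w t :
  (restr_line p x w).[t] = meval p (fun i => x i + w i * t).
Proof.
rewrite horner_mevalP; apply: meval_ext => i.
by rewrite hornerD hornerC hornerZ hornerX.
Qed.

Lemma restr_line_ext n D (p : mpoly R n D) x x' w w' :
  (forall i, x i = x' i) -> (forall i, w i = w' i) ->
  restr_line p x w = restr_line p x' w'.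
Proof.
move=> xx' ww'; apply: eq_bigr => e _; congr (_ * _); apply: eq_bigr => i _.
by rewrite /param_line xx' ww'.
Qed.

Lemma coef0_restr_line n D (p : mpoly R n D) x w : (restr_line p x w)`_0 = meval p x.
Proof.
rewrite -horner_coef0 horner_restr_line; apply: meval_ext => i.
by rewrite mulr0 addr0.
Qed.

Lemma deriv_prod_seq (I : eqType) (r : seq I) (F : I -> {poly R}) : uniq r ->
  (\prod_(i <- r) F i)^`() = \sum_(i <- r) (F i)^`() * \prod_(j <- r | j != i) F j.
Proof.
elim: r => [|a r IH] /=; first by rewrite !big_nil derivC.
case/andP=> a_notin_r uniq_r.
rewrite !big_cons derivM IH // eqxx /= mulr_sumr; congr (_ + _).
  congr (_ * _); rewrite [RHS]big_seq_cond [LHS]big_seq; apply: eq_bigl => j.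
  by case: (boolP (j \in r)) => //= jr; apply/esym/eqP => ja; rewrite -ja jr in a_notin_r.
rewrite [LHS]big_seq [RHS]big_seq; apply: eq_bigr => i ir.
rewrite big_cons.
have -> : (a != i) by apply/eqP => ai; rewrite ai ir in a_notin_r.
by rewrite mulrCA.
Qed.

Lemma deriv_prod (I : finType) (F : I -> {poly R}) :
  (\prod_i F i)^`() = \sum_i (F i)^`() * \prod_(j | j != i) F j.
Proof. by rewrite deriv_prod_seq // index_enum_uniq. Qed.

Definition mdirderiv n D (w : 'I_n -> R) (p : mpoly R n D) : mpoly R n D :=
  [ffun e => \sum_i w i * mderiv i p e].

Definition exp_decr n D (e : exps n D) (i : 'I_n) : exps n D :=
  [ffun j => if j == i then inord (e i).-1 else e j].

Definition monomial n D (q : 'I_n -> {poly R}) (e : exps n D) : {poly R} :=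
  \prod_i q i ^+ e i.

Lemma deriv_monomial_line n D (x w : 'I_n -> R) (e : exps n D) :
  (monomial (param_line x w) e)^`() =
  \sum_i (w i * (e i)%:R) *: monomial (param_line x w) (exp_decr e i).
Proof.
rewrite /monomial deriv_prod; apply: eq_bigr => i _; rewrite -mul_polyC.
rewrite deriv_exp /param_line derivD derivC derivZ derivX add0r alg_polyC.
rewrite [in RHS](bigD1 i) //= /exp_decr ffunE eqxx inordK; last first.
  by apply: leq_ltn_trans (leq_pred _) (ltn_ord _).
rewrite mulrnAl -mulrnAr -mulr_natr polyCM polyC_natr -!mulrA; congr (_ * _).
rewrite mulrA [LHS]mulrC; congr (_ * (_ * _)); apply: eq_bigr => j /negbTE ji.
by rewrite ffunE ji.
Qed.

(* Reindexing by [e |-> e + delta_i] turns the factor [e_i] produced by differentiating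
   a monomial into the coefficient of [mderiv i p]. *)
Lemma sum_exp_decr n D (V : lmodType R) (p : mpoly R n D) (i : 'I_n) (G : exps n D -> V) :
  \sum_(e : exps n D) (p e * (e i)%:R) *: G (exp_decr e i) =
  \sum_(e : exps n D) mderiv i p e *: G e.
Proof.
rewrite (bigID (fun e : exps n D => (0 < e i)%N)) /= [X in _ + X]big1 ?addr0; last first.
  by move=> e; rewrite lt0n negbK => /eqP ->; rewrite mulr0 scale0r.
rewrite (reindex_onto (fun e => exp_incr e i) (fun e => exp_decr e i)) /=; last first.
  move=> e ei; apply/ffunP => j; rewrite !ffunE eqxx; case: eqP => [->|] //.
  by apply: val_inj; rewrite /= !inordK ?prednK // ?ltn_ord // ltnW.
rewrite [RHS](bigID (fun e : exps n D => (e i < D)%N)) /= [X in _ + X]big1 ?addr0; last first.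
  by move=> e; rewrite /mderiv ffunE => /negbTE ->; rewrite scale0r.
have decrK (e : exps n D) : (e i < D)%N -> exp_decr (exp_incr e i) i = e.
  move=> ei; apply/ffunP => j; rewrite !ffunE; case: eqP => [->|] //.
  by rewrite eqxx; apply: val_inj; rewrite /= (@inordK D (e i).+1 ei) /= inordK // ltnW.
have incr_lt (e : exps n D) : (e i < D)%N -> (exp_incr e i i : nat) = (e i).+1.
  by move=> ei; rewrite ffunE eqxx inordK // ltnS.
have incr_max (e : exps n D) : ~~ (e i < D)%N -> (exp_incr e i i : nat) = 0%N.
  rewrite -leqNgt => ei; rewrite ffunE eqxx.
  have -> : (e i = D :> nat) by apply/eqP; rewrite eqn_leq ei -ltnS ltn_ord.
  by rewrite /inord /insubd insubF //= ltnn.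
apply: eq_big => e.
  case: (boolP (e i < D)%N) => ei; first by rewrite incr_lt // decrK // eqxx.
  by rewrite incr_max.
case/andP => incr_pos _.
have ei : (e i < D)%N by apply: contraLR incr_pos => /incr_max ->.
by rewrite decrK // incr_lt // /mderiv ffunE ei mulrC.
Qed.

Lemma mevalPE n D (p : mpoly R n D) q :
  mevalP p q = \sum_(e : exps n D) p e *: monomial q e.
Proof. by apply: eq_bigr => e _; rewrite mul_polyC. Qed.

Lemma deriv_restr_line n D (p : mpoly R n D) (x w : 'I_n -> R) :
  (restr_line p x w)^`() = restr_line (mdirderiv w p) x w.
Proof.
rewrite /restr_line !mevalPE linear_sum /=.
under eq_bigr do rewrite derivZ deriv_monomial_line scaler_sumr.
rewrite exchange_big /=.
under eq_bigr do under eq_bigr do rewrite scalerA mulrCA -scalerA.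
under eq_bigr do rewrite -scaler_sumr sum_exp_decr scaler_sumr.
rewrite exchange_big /=; apply: eq_bigr => e _.
by rewrite ffunE scaler_suml; apply: eq_bigr => i _; rewrite scalerA.
Qed.

Lemma meval_iter_mdirderiv n D j (p : mpoly R n D) x w :
  meval (iter j (mdirderiv w) p) x = (restr_line p x w)`_j *+ j`!.
Proof.
have derivn_restr_line : (restr_line p x w)^`(j) = restr_line (iter j (mdirderiv w) p) x w.
  by elim: j => [|j IH]; rewrite ?derivn0 // derivnS IH deriv_restr_line.
by rewrite -(coef0_restr_line _ x w) -derivn_restr_line coef_derivn addn0 ffactnn.
Qed.

Lemma meval_mdirderiv n D (p : mpoly R n D) x w :
  meval (mdirderiv w p) x = \sum_i w i * meval (mderiv i p) x.
Proof.
rewrite /meval; under eq_bigr do rewrite ffunE mulr_suml.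
rewrite exchange_big /=; apply: eq_bigr => i _; rewrite mulr_sumr.
by apply: eq_bigr => e _; rewrite mulrA.
Qed.

Definition grad n D (p : mpoly R n D) (x : 'I_n -> R) (i : 'I_n) : R := meval (mderiv i p) x.

Lemma coef1_restr_line n D (p : mpoly R n D) x w :
  (restr_line p x w)`_1 = \sum_i grad p x i * w i.
Proof.
rewrite -[LHS]mulr1n -(meval_iter_mdirderiv 1) meval_mdirderiv.
by apply: eq_bigr => i _; rewrite mulrC.
Qed.
End RestrictionToLines.

Section FinFunSplit.
Variable T : finType.

Definition fcons j (i : T) (s : {ffun 'I_j -> T}) : {ffun 'I_j.+1 -> T} :=
  [ffun k => if unlift ord0 k is Some k' then s k' else i].

Lemma fcons0 j i (s : {ffun 'I_j -> T}) : fcons i s ord0 = i.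
Proof. by rewrite ffunE unlift_none. Qed.

Lemma fconsS j i (s : {ffun 'I_j -> T}) k : fcons i s (lift ord0 k) = s k.
Proof. by rewrite ffunE liftK. Qed.

Lemma big_ffunS (R : Type) (idx : R) (op : Monoid.com_law idx) j
    (F : {ffun 'I_j.+1 -> T} -> R) :
  \big[op/idx]_(s : {ffun 'I_j.+1 -> T}) F s =
  \big[op/idx]_(i : T) \big[op/idx]_(s : {ffun 'I_j -> T}) F (fcons i s).
Proof.
rewrite pair_big /= (reindex (fun p : T * {ffun 'I_j -> T} => fcons p.1 p.2)) //=.
exists (fun s : {ffun 'I_j.+1 -> T} => (s ord0, [ffun k => s (lift ord0 k)])).
  move=> [i s] _ /=; rewrite fcons0; congr (_, _).
  by apply/ffunP => k; rewrite ffunE fconsS.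
move=> s _; apply/ffunP => k; rewrite ffunE.
by case: unliftP => [k'|] ->; rewrite ?ffunE.
Qed.

Lemma big_ffun0 (R : Type) (idx : R) (op : Monoid.com_law idx) (F : {ffun 'I_0 -> T} -> R) :
  \big[op/idx]_(s : {ffun 'I_0 -> T}) F s = F (ffun0 (card_ord 0)).
Proof.
rewrite (big_pred1 (ffun0 (card_ord 0))) // => s /=.
by apply/esym/eqP/ffunP => -[].
Qed.
End FinFunSplit.

Section TaylorExpansion.
Variable R : comNzRingType.

Lemma mderivs_fcons n D j i (s : {ffun 'I_j -> 'I_n}) (p : mpoly R n D) :
  mderivs (fcons i s) p = mderiv i (mderivs s p).
Proof.
rewrite /mderivs enum_ordSl /= fcons0 -map_comp; congr (mderiv i (foldr _ _ _)).
by apply: eq_map => k /=; rewrite fconsS.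
Qed.

Lemma iter_mdirderiv n D j (p : mpoly R n D) w :
  iter j (mdirderiv w) p =
  [ffun e => \sum_(s : {ffun 'I_j -> 'I_n}) (\prod_(k < j) w (s k)) * mderivs s p e].
Proof.
elim: j => [|j IH]; apply/ffunP => e.
  by rewrite ffunE big_ffun0 big_ord0 mul1r /mderivs enum_ord0.
rewrite iterS IH /mdirderiv !ffunE big_ffunS; apply: eq_bigr => i _.
rewrite /mderiv ffunE; case: (boolP (e i < D)%N) => ei; last first.
  by rewrite mulr0 big1 // => s _; rewrite mderivs_fcons ffunE (negbTE ei) mulr0.
rewrite ffunE !mulr_sumr; apply: eq_bigr => s _.
rewrite big_ord_recl fcons0 mderivs_fcons ffunE ei.
under [in RHS]eq_bigr do rewrite fconsS.
by ring.
Qed.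

Lemma tP_restr_line D j (f : mpoly R 4 D) P w :
  tP j f P w = (restr_line f P w)`_j *+ j`!.
Proof.
rewrite -meval_iter_mdirderiv iter_mdirderiv /tP /meval.
under [RHS]eq_bigr do rewrite ffunE mulr_suml.
rewrite exchange_big /=; apply: eq_bigr => s _; rewrite mulr_suml.
by apply: eq_bigr => e _; ring.
Qed.
End TaylorExpansion.

Section Orthogonality.
Variable F : fieldType.

Lemma orthogonal_dependent n (g : 'I_n -> F) (x : 'I_n -> 'I_n -> F) :
  (exists i, g i != 0) -> (forall k, \sum_i g i * x k i = 0) ->
  exists2 l : 'I_n -> F, exists k, l k != 0 & forall i, \sum_k l k * x k i = 0.
Proof.
move=> [i0 gi0] x_orth.
pose M := \matrix_(k, i) x k i.
have : \det M^T == 0.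
  apply/det0P; exists (\row_i g i).
    by apply/eqP => /rowP /(_ i0); rewrite !mxE; apply/eqP.
  by apply/rowP => k; rewrite !mxE -[RHS](x_orth k); apply: eq_bigr => i _; rewrite !mxE.
rewrite det_tr => /det0P [v v_neq0 vM].
exists (fun k => v 0 k).
  apply/existsP; apply: contraR v_neq0 => /existsPn v0; apply/eqP/rowP => k.
  by rewrite mxE; move: (v0 k); rewrite negbK => /eqP.
move=> i; move/rowP: vM => /(_ i); rewrite !mxE => vM.
by rewrite -[RHS]vM; apply: eq_bigr => k _; rewrite mxE.
Qed.

Lemma orthogonal_span n (g : 'I_n.+1 -> F) (x : 'I_n.+1 -> 'I_n.+1 -> F) :
  (exists i, g i != 0) -> (forall k, \sum_i g i * x k i = 0) ->
  (forall l : 'I_n -> F,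
     (forall i, \sum_k l k * x (widen_ord (leqnSn n) k) i = 0) -> forall k, l k = 0) ->
  exists l : 'I_n -> F,
    forall i, x ord_max i = \sum_k l k * x (widen_ord (leqnSn n) k) i.
Proof.
move=> g_neq0 x_orth x_indep.
have [l [k0 lk0] l_rel] := orthogonal_dependent g_neq0 x_orth.
have l_rel' i : \sum_k l (widen_ord (leqnSn n) k) * x (widen_ord (leqnSn n) k) i =
                - (l ord_max * x ord_max i).
  by apply/eqP; rewrite -addr_eq0; have := l_rel i; rewrite big_ord_recr => ->.
have lmax_neq0 : l ord_max != 0.
  apply: contra lk0 => /eqP lmax0; apply/eqP.
  have l0 : forall k, l (widen_ord (leqnSn n) k) = 0.
    by apply: x_indep => i; rewrite l_rel' lmax0 mul0r oppr0.
  case: (unliftP ord_max k0) => [k ->|-> //].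
  by rewrite -(l0 k); congr l; apply: val_inj; exact: lift_max.
exists (fun k => - l (widen_ord (leqnSn n) k) / l ord_max) => i.
apply: (mulfI lmax_neq0); rewrite mulr_sumr.
under eq_bigr do rewrite mulrA mulrCA divff // mulr1 mulNr.
by rewrite sumrN l_rel' opprK.
Qed.

Lemma orthogonal_span2 (g x y w : 'I_3 -> F) :
  (exists i, g i != 0) -> indep2 x y ->
  \sum_i g i * x i = 0 -> \sum_i g i * y i = 0 -> \sum_i g i * w i = 0 ->
  exists al be, forall i, w i = al * x i + be * y i.
Proof.
move=> g_neq0 xy_indep gx gy gw.
pose xs (k : 'I_3) := nth w [:: x; y; w] k.
have xs_orth (k : 'I_3) : \sum_i g i * xs k i = 0 by case: k => [[|[|[|m]]] hk] //=.
have [|l w_span] := orthogonal_span g_neq0 xs_orth.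
  move=> l l_rel; have [l0 l1] : l ord0 = 0 /\ l (lift ord0 ord0) = 0.
    by apply: xy_indep => i; rewrite -[RHS](l_rel i) !big_ord_recl big_ord0 addr0.
  case=> -[|[|//]] k_lt; [rewrite -l0 | rewrite -l1]; congr l; exact: val_inj.
exists (l ord0), (l (lift ord0 ord0)) => i.
by rewrite [LHS]w_span !big_ord_recl big_ord0 addr0.
Qed.

Lemma orthogonal_span3 (g x y z w : 'I_4 -> F) :
  (exists i, g i != 0) -> indep3 x y z ->
  \sum_i g i * x i = 0 -> \sum_i g i * y i = 0 -> \sum_i g i * z i = 0 ->
  \sum_i g i * w i = 0 ->
  exists al be ga, forall i, w i = al * x i + be * y i + ga * z i.
Proof.
move=> g_neq0 xyz_indep gx gy gz gw.
pose xs (k : 'I_4) := nth w [:: x; y; z; w] k.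
have xs_orth (k : 'I_4) : \sum_i g i * xs k i = 0 by case: k => [[|[|[|[|m]]]] hk] //=.
have [|l w_span] := orthogonal_span g_neq0 xs_orth.
  move=> l l_rel.
  have [l0 l1 l2] :
      [/\ l ord0 = 0, l (lift ord0 ord0) = 0 & l (lift ord0 (lift ord0 ord0)) = 0].
    by apply: xyz_indep => i; rewrite -[RHS](l_rel i) !big_ord_recl big_ord0 addr0 addrA.
  case=> -[|[|[|//]]] k_lt; [rewrite -l0 | rewrite -l1 | rewrite -l2]; congr l; exact: val_inj.
exists (l ord0), (l (lift ord0 ord0)), (l (lift ord0 (lift ord0 ord0))) => i.
by rewrite [LHS]w_span !big_ord_recl big_ord0 addr0 addrA.
Qed.
Lemma span_of_not_indep3 n (a b z : 'I_n -> F) :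
  indep2 a b -> ~ indep3 a b z -> exists al be, forall i, z i = al * a i + be * b i.
Proof.
move=> ab_indep abz_dep.
have [s [t [u [rel not_all0]]]] : exists s t u,
    (forall i, s * a i + t * b i + u * z i = 0) /\ ~ [/\ s = 0, t = 0 & u = 0].
  apply: NNPP => none; apply: abz_dep => s t u rel; apply: NNPP => not_all0.
  by apply: none; exists s, t, u.
have u_neq0 : u != 0.
  apply/eqP => u0; apply: not_all0; have [s0 t0] : s = 0 /\ t = 0.
    by apply: ab_indep => i; rewrite -(rel i) u0 mul0r addr0.
  by [].
exists (- s / u), (- t / u) => i; apply: (mulfI u_neq0).
have := rel i; rewrite addrC => /eqP; rewrite addr_eq0 => /eqP ->.
by field.
Qed.
End Orthogonality.

Lemma horner_restr_line_reparam (K : fieldType) n d (f : mpoly K n d)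
    (P w : 'I_n -> K) (al be x : K) :
  homogeneous f d -> 1 + al * x != 0 ->
  (restr_line f P (fun i => al * P i + be * w i)).[x] =
  (1 + al * x) ^+ d * (restr_line f P w).[be * x / (1 + al * x)].
Proof.
move=> homf l_neq0; rewrite !horner_restr_line -meval_homogeneous //.
apply: meval_ext => i.
by rewrite mulrDr mulrCA [X in w i * X]mulrC divfK //; ring.
Qed.

(* [X^k] is coprime to [1 + al X], and multiplying by a power of [1 + al X] clears the
   denominators of [horner_restr_line_reparam]. *)
Lemma dvdXn_restr_line_reparam (K : closedFieldType) n d (f : mpoly K n d)
    (P w : 'I_n -> K) (al be : K) k :
  homogeneous f d -> 'X^k %| restr_line f P w ->
  'X^k %| restr_line f P (fun i => al * P i + be * w i).
Proof.
move=> homf /dvdpP [q q_def].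
pose lam : {poly K} := 1 + al *: 'X.
have lam_neq0 : lam != 0.
  by apply: contraTneq isT => /(congr1 (horner^~ 0)); rewrite !hornerE => /eqP; rewrite oner_eq0.
pose m := size q.
pose S : {poly K} := be ^+ k *: (lam ^+ d *
    \sum_(i < m) (q`_i * be ^+ i) *: ('X^i * lam ^+ (m - i))).
have F_lam : restr_line f P (fun i => al * P i + be * w i) * lam ^+ (k + m) = S * 'X^k.
  apply: (poly_horner_eq_off_root lam_neq0) => x lx.
  have lamx : lam.[x] = 1 + al * x by rewrite /lam hornerD hornerC hornerZ hornerX.
  set l := 1 + al * x in lamx.
  have l_neq0 : l != 0 by rewrite -lamx -rootE.
  set y := be * x / l.
  have yl : y * l = be * x by rewrite /y divfK.
  have qy : l ^+ m * q.[y] = \sum_(i < m) q`_i * be ^+ i * (x ^+ i * l ^+ (m - i)).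
    rewrite horner_coef mulr_sumr; apply: eq_bigr => i _.
    have -> : l ^+ m = l ^+ (m - i) * l ^+ i by rewrite -exprD subnK // ltnW.
    transitivity (q`_i * (y * l) ^+ i * l ^+ (m - i)); first by rewrite [(y * l) ^+ i]exprMn; ring.
    by rewrite yl exprMn; ring.
  rewrite hornerM (horner_restr_line_reparam _ _ _ homf l_neq0) -/l -/y q_def.
  transitivity (l ^+ d * (y * l) ^+ k * (l ^+ m * q.[y])).
    by rewrite hornerM hornerXn horner_exp lamx exprD [(y * l) ^+ k]exprMn; ring.
  rewrite qy yl !hornerE -/l horner_sum.
  transitivity (be ^+ k * l ^+ d *
      (\sum_(i < m) q`_i * be ^+ i * (x ^+ i * l ^+ (m - i))) * x ^+ k).
    by rewrite exprMn; ring.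
  congr (_ * _ * _); apply: eq_bigr => i _.
  by rewrite hornerZ hornerM hornerXn horner_exp lamx.
have Xk_lam_coprime : coprimep ('X^k) (lam ^+ (k + m)).
  apply: coprimep_expl; apply: coprimep_expr.
  by rewrite coprimep_sym coprimepX /root /lam !hornerE oner_neq0.
by rewrite -(Gauss_dvdpl _ Xk_lam_coprime) F_lam dvdp_mull.
Qed.

Section Homogeneous3.
Variable K : comNzRingType.
Notation R3 := {poly {poly {poly K}}}.

(* [{poly {poly {poly K}}}] encodes [K[s,t,u]]: [G`_i`_j`_k] is the coefficient of
   [s^i t^j u^k]. *)
Definition homog3 (n : nat) (G : R3) : Prop :=
  forall i j k : nat, (i + j + k != n)%N -> G`_i`_j`_k = 0.

Lemma homog3_0 n : homog3 n 0.
Proof. by move=> i j k _; rewrite !coef0. Qed.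

Lemma homog3D n G1 G2 : homog3 n G1 -> homog3 n G2 -> homog3 n (G1 + G2).
Proof. by move=> h1 h2 i j k h; rewrite !coefD h1 // h2 // addr0. Qed.

Lemma homog3M n1 n2 G1 G2 :
  homog3 n1 G1 -> homog3 n2 G2 -> homog3 (n1 + n2) (G1 * G2).
Proof.
move=> h1 h2 i j k hne.
rewrite coefM !coef_sum big1 // => i1 _.
rewrite coefM coef_sum big1 // => j1 _.
rewrite coefM big1 // => k1 _.
have [e1|e1] := eqVneq (i1 + j1 + k1)%N n1; last by rewrite h1 // mul0r.
rewrite h2 ?mulr0 //.
have := ltn_ord i1; have := ltn_ord j1; have := ltn_ord k1.
move: hne => /eqP hne ? ? ?; apply/eqP => e2; apply: hne; lia.
Qed.

Lemma homog3_1 : homog3 0 1.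
Proof.
move=> i j k; rewrite coef1; case: i => [|i] /=; last by rewrite !coef0.
rewrite coef1; case: j => [|j] /=; last by rewrite !coef0.
by rewrite coef1; case: k.
Qed.

Lemma homog3X n G m : homog3 n G -> homog3 (n * m) (G ^+ m).
Proof.
move=> h; elim: m => [|m IH]; first by rewrite muln0 expr0; exact: homog3_1.
by rewrite exprS mulnS; apply: homog3M.
Qed.

Lemma homog3C x : homog3 0 (x%:P%:P%:P).
Proof.
move=> i j k; rewrite coefC; case: i => [|i] /=; last by rewrite !coef0.
rewrite coefC; case: j => [|j] /=; last by rewrite !coef0.
by rewrite coefC; case: k.
Qed.

Lemma homog3_s : homog3 1 'X.
Proof.
move=> i j k; rewrite coefX; case: i => [|[|i]] /=; rewrite ?coef0 //.
rewrite coef1; case: j => [|j] /=; last by rewrite !coef0.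
by rewrite coef1; case: k.
Qed.

Lemma homog3_t : homog3 1 ('X : {poly {poly K}})%:P.
Proof.
move=> i j k; rewrite coefC; case: i => [|i] /=; last by rewrite !coef0.
rewrite coefX; case: j => [|[|j]] /=; rewrite ?coef0 //.
by rewrite coef1; case: k.
Qed.

Lemma homog3_u : homog3 1 (('X : {poly K})%:P)%:P.
Proof.
move=> i j k; rewrite coefC; case: i => [|i] /=; last by rewrite !coef0.
rewrite coefC; case: j => [|j] /=; last by rewrite !coef0.
by rewrite coefX; case: k => [|[|k]].
Qed.
End Homogeneous3.

Notation coord_t := (lift ord0 ord0 : 'I_3).
Notation coord_u := (lift ord0 (lift ord0 ord0) : 'I_3).

Section ResidualConstruction.
Variable K : closedFieldType.
Notation R3 := {poly {poly {poly K}}}.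
Variables (d : nat) (f : mpoly K 4 d) (a b c : 'I_4 -> K).

Definition const3 (x : K) : R3 := x%:P%:P%:P.
Definition plane_lin3 (m : 'I_4) : R3 :=
  const3 (a m) * 'X + const3 (b m) * ('X : {poly {poly K}})%:P +
  const3 (c m) * (('X : {poly K})%:P)%:P.
Definition plane_poly : R3 := meval [ffun e => const3 (f e)] plane_lin3.
Definition eval3 (Y : R3) s t u := Y.[s%:P%:P].[t%:P].[u].

Hypothesis homf : homogeneous f d.

Lemma homog3_plane_poly : homog3 d plane_poly.
Proof.
apply: (big_ind (homog3 d)); [exact: homog3_0 | exact: homog3D|] => e _.
rewrite ffunE; have [fe|fe] := eqVneq (f e) 0.
  by rewrite /const3 fe !polyC0 mul0r; exact: homog3_0.
suff : homog3 (0 + \sum_(i < 4) (e i : nat)) (const3 (f e) * \prod_i plane_lin3 i ^+ e i).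
  by rewrite add0n (homf fe).
apply: homog3M; first exact: homog3C.
apply: (@big_ind2 nat R3 (fun n G => homog3 n G)) => [|n1 G1 n2 G2|m _]; first exact: homog3_1.
  exact: homog3M.
rewrite -[X in homog3 X _]mul1n; apply: homog3X.
rewrite /plane_lin3 -[1%N]/(0 + 1)%N.
by apply: homog3D; [apply: homog3D|]; apply: homog3M;
  [exact: homog3C|exact: homog3_s|exact: homog3C|exact: homog3_t|exact: homog3C|exact: homog3_u].
Qed.

Lemma eval3_plane_poly s t u :
  eval3 plane_poly s t u = meval f (fun m => s * a m + t * b m + u * c m).
Proof.
rewrite /eval3 /plane_poly /meval !horner_sum; apply: eq_bigr => e _.
rewrite ffunE !hornerM /const3 !hornerC !horner_prod; congr (_ * _); apply: eq_bigr => m _.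
rewrite !horner_exp /plane_lin3 !hornerE.
by congr (_ ^+ _); ring.
Qed.

Lemma eval3_homog3 (Y : R3) s t u : homog3 d Y ->
  eval3 Y s t u = \sum_(i < d.+1) \sum_(j < d.+1) \sum_(k < d.+1)
     Y`_i`_j`_k * (s ^+ i * t ^+ j * u ^+ k).
Proof.
move=> hY.
have sz3 : forall i j, (size (Y`_i`_j)%R <= d.+1)%N.
  move=> i j; apply/leq_sizeP => k hk; apply: hY; apply/eqP => e; lia.
have sz2 : forall i, (size (Y`_i)%R <= d.+1)%N.
  move=> i; apply/leq_sizeP => j hj; apply/polyP => k; rewrite coef0.
  apply: hY; apply/eqP => e; lia.
have sz1 : (size Y <= d.+1)%N.
  apply/leq_sizeP => i hi; apply/polyP => j; apply/polyP => k; rewrite !coef0.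
  apply: hY; apply/eqP => e; lia.
rewrite /eval3 (horner_coef_wide _ sz1) !horner_sum; apply: eq_bigr => i _.
rewrite !hornerM !horner_exp !hornerC (horner_coef_wide _ (sz2 i)) !horner_sum mulr_suml.
apply: eq_bigr => j _.
rewrite !hornerM !horner_exp !hornerC (horner_coef_wide _ (sz3 i j)) mulr_suml mulr_suml.
by apply: eq_bigr => k _; ring.
Qed.

Hypothesis fline : forall s t : K, meval f (fun m => s * a m + t * b m) = 0.

Lemma plane_poly_coef_u0 i j : plane_poly`_i`_j`_0 = 0.
Proof.
have [i_lt|i_ge] := ltnP i d.+1; last by apply: homog3_plane_poly; apply/eqP => e; lia.
have [j_lt|j_ge] := ltnP j d.+1; last by apply: homog3_plane_poly; apply/eqP => e; lia.
apply: (@bivariate_coef_eq0 _ d.+1 (fun i j => plane_poly`_i`_j`_0)) => // s t.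
rewrite -[RHS](fline s t); transitivity (eval3 plane_poly s t 0).
  rewrite eval3_homog3; last exact: homog3_plane_poly.
  apply: eq_bigr => i' _; apply: eq_bigr => j' _.
  rewrite big_ord_recl expr0 mulr1 big1 ?addr0 // => k _.
  by rewrite expr0n /= !mulr0.
by rewrite eval3_plane_poly; apply: meval_ext => m; rewrite mul0r addr0.
Qed.

Definition residual : mpoly K 3 d :=
  [ffun e : exps 3 d => plane_poly`_(e ord0)`_(e coord_t)`_((e coord_u).+1)].

Lemma meval_residual s t u : meval residual (vec3 s t u) =
  \sum_(i < d.+1) \sum_(j < d.+1) \sum_(k < d.+1)
    plane_poly`_i`_j`_k.+1 * (s ^+ i * t ^+ j * u ^+ k).
Proof.
rewrite /meval big_ffunS; apply: eq_bigr => i _; rewrite big_ffunS; apply: eq_bigr => j _.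
rewrite big_ffunS; apply: eq_bigr => k _.
rewrite big_ffun0 ffunE !fconsS !fcons0 !big_ord_recl big_ord0 !fconsS !fcons0 /=.
by rewrite /vec3 /= mulr1 !mulrA.
Qed.

Lemma meval_plane_residual s t u :
  meval f (fun m => s * a m + t * b m + u * c m) = u * meval residual (vec3 s t u).
Proof.
rewrite -eval3_plane_poly eval3_homog3; last exact: homog3_plane_poly.
rewrite meval_residual mulr_sumr; apply: eq_bigr => i _; rewrite mulr_sumr; apply: eq_bigr => j _.
rewrite big_ord_recl plane_poly_coef_u0 mul0r add0r mulr_sumr big_ord_recr /=.
rewrite (homog3_plane_poly (i:=i) (j:=j) (k:=d.+1)) ?mul0r ?mulr0 ?addr0; last first.
  by apply/eqP => e; lia.
by apply: eq_bigr => k _; rewrite exprS; ring.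
Qed.
End ResidualConstruction.

Lemma residual_exists (K : closedFieldType) d (f : mpoly K 4 d) (a b c : 'I_4 -> K) :
  homogeneous f d -> (forall s t : K, meval f (fun m => s * a m + t * b m) = 0) ->
  exists h : mpoly K 3 d, forall s t u : K,
    meval f (fun m => s * a m + t * b m + u * c m) = u * meval h (vec3 s t u).
Proof. by move=> homf fline; exists (residual f a b c) => s t u; apply: meval_plane_residual. Qed.

Lemma ord3P (k : 'I_3) : [\/ k = ord0, k = coord_t | k = coord_u].
Proof.
by case: k => -[|[|[|//]]] k_lt; [apply: Or31 | apply: Or32 | apply: Or33]; apply: val_inj.
Qed.

Section ResidualCurve.
Variables (K : closedFieldType) (d : nat) (f : mpoly K 4 d) (a b c : 'I_4 -> K).
Variables (h : mpoly K 3 d) (P : 'I_4 -> K) (s0 t0 : K).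
Hypothesis homf : homogeneous f d.
Hypothesis f_plane : forall s t u : K,
  meval f (fun i => s * a i + t * b i + u * c i) = u * meval h (vec3 s t u).
Hypothesis P_def : P = (fun i => s0 * a i + t0 * b i).

Definition plane_pt (v : 'I_3 -> K) : 'I_4 -> K :=
  fun i => v ord0 * a i + v coord_t * b i + v coord_u * c i.

Let Q := vec3 s0 t0 0.
Let e_u : 'I_3 -> K := vec3 0 0 1.

Lemma restr_line_plane v :
  restr_line f P (plane_pt v) = (v coord_u *: 'X) * restr_line h Q v.
Proof.
apply: poly_horner_eq => x; rewrite hornerM hornerZ hornerX !horner_restr_line.
transitivity (meval f (fun i => (s0 + v ord0 * x) * a i + (t0 + v coord_t * x) * b i +
                                (v coord_u * x) * c i)).
  by apply: meval_ext => i; rewrite P_def /plane_pt; ring.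
rewrite f_plane; congr (_ * _); apply: meval_ext => k.
by case: (ord3P k) => ->; rewrite /Q /= ?add0r.
Qed.

Lemma coef_restr_line_plane v n :
  (restr_line f P (plane_pt v))`_n.+1 = v coord_u * (restr_line h Q v)`_n.
Proof. by rewrite restr_line_plane -scalerAl coefZ coefXM. Qed.

Lemma restr_line_plane_line al be : restr_line f P (plane_pt (vec3 al be 0)) = 0.
Proof. by rewrite restr_line_plane scale0r mul0r. Qed.

Lemma meval_P_eq0 : meval f P = 0.
Proof.
by rewrite -(coef0_restr_line f P (plane_pt (vec3 0 0 0))) restr_line_plane_line coef0.
Qed.

Lemma restr_line_plane_u : restr_line f P c = 'X * restr_line h Q e_u.
Proof.
rewrite -['X]scale1r (_ : 1 = e_u coord_u) // -restr_line_plane.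
by apply: restr_line_ext => // i; rewrite /plane_pt /e_u /vec3 /=; ring.
Qed.

Lemma nonzero_vec_base : nonzero_vec P -> nonzero_vec Q.
Proof.
rewrite P_def => -[i]; have [s00|] := eqVneq s0 0; last by exists ord0.
have [t00|] := eqVneq t0 0; last by exists coord_t.
by rewrite s00 t00 !mul0r addr0 eqxx.
Qed.

Section TangentDirection.
Hypothesis c_tangent : (restr_line f P c)`_1 = 0.
Hypothesis c_osc : (restr_line f P c)`_2 = 0.

Lemma residual_base_root : meval h Q = 0.
Proof. by rewrite -(coef0_restr_line h Q e_u) -[RHS]c_tangent restr_line_plane_u coefXM. Qed.

Lemma residual_grad_u : \sum_k grad h Q k * e_u k = 0.
Proof. by rewrite -coef1_restr_line -[RHS]c_osc restr_line_plane_u coefXM. Qed.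

(* Reparametrizing the line through [P] in direction [c] to direction [P + c] keeps
   the contact order [3], which gives the Euler relation at [Q] without homogeneity of [h]. *)
Lemma residual_grad_base : \sum_k grad h Q k * Q k = 0.
Proof.
have Xc3 : 'X^3 %| restr_line f P c.
  apply/dvdp_XnP => -[|[|[|//]]] _ //.
  by rewrite coef0_restr_line meval_P_eq0.
move/dvdp_XnP: (dvdXn_restr_line_reparam 1 1 homf Xc3) => /(_ 2%N isT).
rewrite (restr_line_ext f (x' := P) (w' := plane_pt (fun k => Q k + e_u k))) //; last first.
  by move=> i; rewrite P_def /plane_pt /Q /e_u /vec3 /=; ring.
rewrite coef_restr_line_plane coef1_restr_line /=.
have -> : Q coord_u + e_u coord_u = 1 by rewrite /Q /e_u /vec3 /= add0r.
rewrite mul1r.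
under eq_bigr do rewrite mulrDr.
by rewrite big_split /= residual_grad_u addr0.
Qed.

Lemma residual_grad_neq0 (z : 'I_4 -> K) : indep3 a b c -> (exists i, grad f P i != 0) ->
  (restr_line f P z)`_1 = 0 -> (restr_line f P z)`_2 != 0 -> exists k, grad h Q k != 0.
Proof.
move=> abc_indep gradf_neq0 z_tangent z_osc.
have line_tangent (w : 'I_4 -> K) (al be : K) : (forall i, w i = al * a i + be * b i) ->
    \sum_i grad f P i * w i = 0.
  move=> w_def; rewrite -coef1_restr_line -[RHS](coef0 _ 1) -(restr_line_plane_line al be).
  apply: (congr1 (fun p : {poly K} => p`_1)); apply: restr_line_ext => // i.
  by rewrite w_def /plane_pt /vec3 /=; ring.
have ga : \sum_i grad f P i * a i = 0 by apply: (line_tangent _ 1 0) => i; ring.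
have gb : \sum_i grad f P i * b i = 0 by apply: (line_tangent _ 0 1) => i; ring.
have gc : \sum_i grad f P i * c i = 0 by rewrite -coef1_restr_line.
have gz : \sum_i grad f P i * z i = 0 by rewrite -coef1_restr_line.
have [al [be [ga' z_def]]] := orthogonal_span3 gradf_neq0 abc_indep ga gb gc gz.
move: z_osc; rewrite (restr_line_ext f (x' := P) (w' := plane_pt (vec3 al be ga'))) //.
rewrite coef_restr_line_plane coef1_restr_line => osc_neq0.
apply/existsP; apply: contraNT osc_neq0 => /existsPn grad_h0.
by rewrite big1 ?mulr0 // => k _; rewrite (eqP (negbNE (grad_h0 k))) mul0r.
Qed.

Lemma restr_line_coef3_eq0 (v : 'I_3 -> K) : (exists k, grad h Q k != 0) ->
  indep2 Q v -> 'X^3 %| restr_line h Q v -> (restr_line f P c)`_3 = 0.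
Proof.
move=> grad_neq0 Qv_indep /dvdp_XnP Xv3.
have grad_v : \sum_k grad h Q k * v k = 0 by rewrite -coef1_restr_line Xv3.
have [al [be e_u_def]] :=
  orthogonal_span2 grad_neq0 Qv_indep residual_grad_base grad_v residual_grad_u.
have Xv4 : 'X^4 %| restr_line f P (plane_pt v).
  apply/dvdp_XnP => -[_|n n_lt4]; first by rewrite coef0_restr_line meval_P_eq0.
  by rewrite coef_restr_line_plane Xv3 ?mulr0.
have c_def i : c i = al * P i + be * plane_pt v i.
  transitivity (plane_pt e_u i); first by rewrite /plane_pt /e_u /vec3 /=; ring.
  by rewrite /plane_pt !e_u_def P_def /Q /vec3 /=; ring.
rewrite (restr_line_ext f (fun=> erefl) c_def).
by move/dvdp_XnP: (dvdXn_restr_line_reparam al be homf Xv4); apply.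
Qed.
End TangentDirection.
End ResidualCurve.

Lemma tP3_eq0_of_residual (K : closedFieldType) d (f : mpoly K 4 d) (a b c : 'I_4 -> K)
    (h : mpoly K 3 d) (P : 'I_4 -> K) (s0 t0 : K) :
  (2%:R : K) != 0 -> homogeneous f d -> smooth_surface f ->
  (forall s t u : K,
     meval f (fun i => s * a i + t * b i + u * c i) = u * meval h (vec3 s t u)) ->
  P = (fun i => s0 * a i + t0 * b i) -> nonzero_vec P ->
  ~ (forall z, tP 1 f P z = 0 -> tP 2 f P z = 0) ->
  indep3 a b c -> second_kind f a b ->
  tP 1 f P c = 0 -> tP 2 f P c = 0 -> tP 3 f P c = 0.
Proof.
move=> two_neq0 homf smoothf f_plane P_def P_neq0 nondeg abc_indep second.
have tP1E w : tP 1 f P w = (restr_line f P w)`_1 by rewrite tP_restr_line.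
have tP2E w : tP 2 f P w = (restr_line f P w)`_2 * 2%:R by rewrite tP_restr_line mulr_natr.
rewrite tP1E tP2E tP_restr_line => c_tangent /eqP.
rewrite mulf_eq0 (negbTE two_neq0) orbF => /eqP c_osc.
have gradf_neq0 : exists i, grad f P i != 0.
  apply: NNPP => grad0; apply: (smoothf P P_neq0 (meval_P_eq0 f_plane P_def)) => i.
  by apply: NNPP => gi; apply: grad0; exists i; apply/eqP.
have [z [z_tangent z_osc]] :
    exists z, (restr_line f P z)`_1 = 0 /\ (restr_line f P z)`_2 != 0.
  apply: NNPP => none; apply: nondeg => z; rewrite tP1E tP2E => z_tangent.
  apply: NNPP => z_osc; apply: none; exists z; split => //.
  by apply/eqP => c2; apply: z_osc; rewrite c2 mul0r.
have [v [Qv_indep Xv3]] := second c abc_indep h f_plane s0 t0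
  (nonzero_vec_base P_def P_neq0) (residual_base_root f_plane P_def c_tangent).
have gradh_neq0 := residual_grad_neq0 f_plane P_def c_tangent abc_indep gradf_neq0 z_tangent z_osc.
by rewrite (restr_line_coef3_eq0 homf f_plane P_def c_tangent c_osc gradh_neq0 Qv_indep Xv3) mul0rn.
Qed.

Lemma restr_line_in_line (K : closedFieldType) d (f : mpoly K 4 d) (a b : 'I_4 -> K) s0 t0 al be :
  (forall s t, meval f (fun i => s * a i + t * b i) = 0) ->
  restr_line f (fun i => s0 * a i + t0 * b i) (fun i => al * a i + be * b i) = 0.
Proof.
move=> f_ab; apply: poly_horner_eq0 => x.
rewrite horner_restr_line -(f_ab (s0 + al * x) (t0 + be * x)).
by apply: meval_ext => i; ring.
Qed.

Unset Implicit Arguments.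

Theorem lemma2p7 (K : closedFieldType) (d : nat) (f : mpoly K 4 d)
  (a b P : 'I_4 -> K) :
  (3 <= d)%N ->
  (forall p : nat, p \in [pchar K] -> (d < p)%N) ->
  f != 0 -> homogeneous f d -> smooth_surface f ->
  line_on f a b ->
  (exists s0 t0 : K, P = (fun i => s0 * a i + t0 * b i)) -> nonzero_vec P ->
  ~ (forall z : 'I_4 -> K, tP 1 f P z = 0 -> tP 2 f P z = 0) ->
  second_kind f a b ->
  forall z : 'I_4 -> K, tP 1 f P z = 0 -> tP 2 f P z = 0 -> tP 3 f P z = 0.
Proof.
move=> d_ge3 pchar_gt_d _ homf smoothf [ab_indep f_ab] [s0 [t0 P_def]] P_neq0 nondeg second z.
have two_neq0 : (2%:R : K) != 0.
  apply/negP => two_eq0; have /pchar_gt_d : 2%N \in [pchar K] by rewrite inE /= two_eq0.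
  by rewrite ltnNge (leq_trans _ d_ge3).
have [abz_indep | abz_dep] := classic (indep3 a b z).
  have [h f_plane] := residual_exists z homf f_ab.
  exact: (tP3_eq0_of_residual two_neq0 homf smoothf f_plane P_def).
have [al [be z_def]] := span_of_not_indep3 ab_indep abz_dep.
move=> _ _; rewrite tP_restr_line P_def (restr_line_ext f (fun=> erefl) z_def).
by rewrite restr_line_in_line // coef0 mul0rn.
Qed.
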